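(* Let $A_1,A_2,A_3\in\mathbb{R}^n_s$ be three distinct points lying on a gyrocircle in the Einstein gyrovector space $\mathbb{R}^n_s$, such that the gyrosecant gyroline through $A_2,A_3$ and the gyrotangent gyroline of the gyrocircle with tangency point $A_1$ share a point $P$ not on the gyrocircle. Let $d_k=\|\ominus A_k\oplus P\|$ for $k=1,2,3$ and $d_{23}=\|\ominus A_2\oplus A_3\|$ (when $A_2$ lies between $P$ and $A_3$, one has $d_{23}=d_3\ominus d_2$, where for reals $a\ominus b=(a-b)/(1-ab/s^2)$). Then $$\gamma_{d_1}^2d_1^2=\frac{2}{\gamma_{d_{23}}+1}\,\gamma_{d_2}d_2\,\gamma_{d_3}d_3 .$$
   Context: Fix $s>0$, $n\ge2$; $\mathbb{R}^n_s=\{v\in\mathbb{R}^n:\|v\|<s\}$ with Einstein addition $u\oplus v=\frac{1}{1+u\cdot v/s^2}\{u+\frac{1}{\gamma_u}v+\frac{1}{s^2}\frac{\gamma_u}{1+\gamma_u}(u\cdot v)u\}$, $\gamma_v=(1-\|v\|^2/s^2)^{-1/2}$ and for real $0\le a<s$, $\gamma_a=(1-a^2/s^2)^{-1/2}$; $\ominus v=-v$. Gyrodistance between $A,B$: $\|\ominus A\oplus B\|$. Gyrolines are intersections of Euclidean lines with the ball. A gyroplane is $(A_1\oplus\mathrm{span}\{\ominus A_1\oplus A_2,\ominus A_1\oplus A_3\})\cap\mathbb{R}^n_s$ for $\ominus A_1\oplus A_2,\ominus A_1\oplus A_3$ linearly independent; a gyrocircle with gyrocenter $O$ and gyroradius $r>0$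 is the set of points of a gyroplane containing $O$ at gyrodistance $r$ from $O$. A gyrosecant gyroline meets the gyrocircle in two different points; a gyrotangent gyroline is a gyroline in the gyroplane of the gyrocircle meeting it in exactly one point (the tangency point). *)

From HB Require Import structures.
From mathcomp Require Import all_boot all_order all_algebra.
From mathcomp Require Import reals.
Set Implicit Arguments. Unset Strict Implicit. Unset Printing Implicit Defensive.
Import Order.TTheory GRing.Theory Num.Theory.
Local Open Scope ring_scope.

Section Einstein.
Variables (R : realType) (n : nat) (s : R).
Notation vec := 'rV[R]_n.

Definition dot (u v : vec) : R := \sum_(i < n) u ord0 i * v ord0 i.
Definition enorm (v : vec) : R := Num.sqrt (dot v v).

Definition inball (v : vec) : Prop := enorm v < s.

Definition gammaR (a : R) : R := (Num.sqrt (1 - a ^+ 2 / s ^+ 2))^-1.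
Definition gammaV (v : vec) : R := gammaR (enorm v).

Definition eadd (u v : vec) : vec :=
  (1 + dot u v / s ^+ 2)^-1 *:
    (u + (gammaV u)^-1 *: v
       + (s ^+ 2)^-1 * (gammaV u / (1 + gammaV u)) * dot u v *: u).

Definition gyrodist (A B : vec) : R := enorm (eadd (- A) B).

(* gyroline through two distinct points Q1 Q2 of the ball:
   the Euclidean line through them intersected with the ball *)
Definition gyroline (Q1 Q2 : vec) (X : vec) : Prop :=
  inball X /\ exists t : R, X = Q1 + t *: (Q2 - Q1).

Definition linindep2 (w1 w2 : vec) : Prop :=
  forall a b : R, a *: w1 + b *: w2 = 0 -> a = 0 /\ b = 0.

Definition gyroplane_data (A1 A2 A3 : vec) : Prop :=
  [/\ inball A1, inball A2, inball A3 &
      linindep2 (eadd (- A1) A2) (eadd (- A1) A3)].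

(* gyroplane (A1 (+) span{(-)A1(+)A2, (-)A1(+)A3}) /\ R^n_s;
   the span vector w is taken in the ball *)
Definition gyroplane (A1 A2 A3 : vec) (X : vec) : Prop :=
  inball X /\
  exists a b : R,
    let w := a *: eadd (- A1) A2 + b *: eadd (- A1) A3 in
    inball w /\ X = eadd A1 w.

(* gyrocircle with gyrocenter O, gyroradius r, in the gyroplane given by
   B1 B2 B3 (which must contain O) *)
Definition gyrocircle (B1 B2 B3 O : vec) (r : R) (X : vec) : Prop :=
  gyroplane B1 B2 B3 X /\ gyrodist O X = r.

End Einstein.

(* The gyrodistance of u and v satisfies gammaR (gyrodist u v) = gdot u v, where
   gdot u v = gammaV u * gammaV v * (1 - u.v / s^2), so the gyrocircle with centre O
   and gyroradius r is cut out by gdot O X = c := gammaR r.  Along a Euclidean line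
   X = P + t w, after dividing by gammaV X / gammaV P, both gdot O X and the
   normalisation gdot X X = 1 are polynomials in t of degree one and two; the points of
   the gyrocircle on the line are therefore the roots of a quadratic in t.  Vieta's
   formulas for the two roots of the gyrosecant and the double root of the gyrotangent
   reduce both sides of the identity to the gyro-power s^2 ((gdot O P)^2 - c^2) / c^2
   of P. *)

From mathcomp Require Import all_boot all_order all_algebra.
From mathcomp Require Import reals.
From mathcomp Require Import ring lra.
Import Order.TTheory GRing.Theory Num.Theory.
Local Open Scope ring_scope.
Set Implicit Arguments. Unset Strict Implicit.

Section Dot.
Variables (R : realType) (n : nat).
Implicit Types u v w : 'rV[R]_n.

Lemma dotC u v : dot u v = dot v u.
Proof. by apply: eq_bigr => i _; rewrite mulrC. Qed.

Lemma dotDl u v w : dot (u + v) w = dot u w + dot v w.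
Proof. by rewrite /dot -big_split; apply: eq_bigr => i _; rewrite !mxE mulrDl. Qed.

Lemma dotZl (a : R) u v : dot (a *: u) v = a * dot u v.
Proof. by rewrite /dot mulr_sumr; apply: eq_bigr => i _; rewrite !mxE mulrA. Qed.

Lemma dotNl u v : dot (- u) v = - dot u v.
Proof. by rewrite -scaleN1r dotZl mulN1r. Qed.

Lemma dotDr u v w : dot w (u + v) = dot w u + dot w v.
Proof. by rewrite dotC dotDl !(dotC w). Qed.

Lemma dotZr (a : R) u v : dot v (a *: u) = a * dot v u.
Proof. by rewrite dotC dotZl dotC. Qed.

Lemma dotNr u v : dot v (- u) = - dot v u.
Proof. by rewrite dotC dotNl dotC. Qed.

Lemma dot_ge0 u : 0 <= dot u u.
Proof. by apply: sumr_ge0 => i _; rewrite -expr2 sqr_ge0. Qed.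

Lemma dot_gt0 u : u != 0 -> 0 < dot u u.
Proof.
move=> u_neq0; rewrite lt_def dot_ge0 andbT; apply: contra u_neq0 => /eqP u0.
have entry_sqr_ge0 (i : 'I_n) : true -> 0 <= u ord0 i * u ord0 i.
  by rewrite -expr2 sqr_ge0.
apply/eqP/rowP => i; have /eqP := @psumr_eq0P _ _ _ _ entry_sqr_ge0 u0 i isT.
by rewrite mxE mulf_eq0 orbb => /eqP.
Qed.

Lemma dot2_le u v : 2 * dot u v <= dot u u + dot v v.
Proof.
have := dot_ge0 (u - v).
rewrite !dotDl !dotDr !dotNl !dotNr (dotC v u); lra.
Qed.

End Dot.

Section Gamma.
Variables (R : realType) (n : nat) (s : R).
Hypothesis s_gt0 : 0 < s.
Implicit Types (x y : R) (u v O X : 'rV[R]_n).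

Let s2_gt0 : 0 < s ^+ 2. Proof. exact: exprn_gt0. Qed.
Let s_neq0 : s != 0. Proof. by rewrite gt_eqF. Qed.

Lemma gamma_defect_gt0 x : 0 <= x -> (0 < 1 - x ^+ 2 / s ^+ 2) = (x < s).
Proof.
move=> x_ge0; rewrite subr_gt0 ltr_pdivrMr // mul1r.
by rewrite ltr_pXn2r // ?nnegrE ?ltW.
Qed.

Lemma gammaR_sqr x : 0 <= x < s -> gammaR s x ^+ 2 * (1 - x ^+ 2 / s ^+ 2) = 1.
Proof.
case/andP=> x_ge0; rewrite -gamma_defect_gt0 // => defect_gt0.
by rewrite /gammaR exprVn sqr_sqrtr ?ltW // mulVf ?gt_eqF.
Qed.

Lemma gammaR_gt0 x : 0 <= x < s -> 0 < gammaR s x.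
Proof.
by case/andP=> x_ge0; rewrite -gamma_defect_gt0 // => ?; rewrite invr_gt0 sqrtr_gt0.
Qed.

Lemma gammaR_inj x y : 0 <= x < s -> 0 <= y < s -> gammaR s x = gammaR s y -> x = y.
Proof.
move=> x_range y_range gxy.
have g_neq0 : gammaR s y ^+ 2 != 0 by rewrite expf_neq0 // gt_eqF // gammaR_gt0.
have defect_eq : 1 - x ^+ 2 / s ^+ 2 = 1 - y ^+ 2 / s ^+ 2.
  by apply: (mulfI g_neq0); rewrite -{1}gxy !gammaR_sqr.
have /eqP : x ^+ 2 = y ^+ 2.
  by apply: (mulIf (invr_neq0 (lt0r_neq0 s2_gt0))); lra.
by rewrite eqrXn2 // ?(andP x_range).1 ?(andP y_range).1 // => /eqP.
Qed.

Lemma gammaR_mul_sqr x : 0 <= x < s -> (gammaR s x * x) ^+ 2 = s ^+ 2 * (gammaR s x ^+ 2 - 1).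
Proof.
by move/gammaR_sqr=> g_sqr; rewrite -{1}g_sqr; field.
Qed.

Lemma enorm_sqr u : enorm u ^+ 2 = dot u u.
Proof. by rewrite /enorm sqr_sqrtr // dot_ge0. Qed.

Lemma inball_range u : inball s u -> 0 <= enorm u < s.
Proof. by move=> u_in; rewrite sqrtr_ge0. Qed.

Lemma inballE u : inball s u <-> dot u u < s ^+ 2.
Proof.
by rewrite /inball -gamma_defect_gt0 ?sqrtr_ge0 // enorm_sqr subr_gt0 ltr_pdivrMr // mul1r.
Qed.

Lemma gammaV_gt0 u : inball s u -> 0 < gammaV s u.
Proof. by move/inball_range/gammaR_gt0. Qed.

Lemma gammaV_sqr u : inball s u -> gammaV s u ^+ 2 * (1 - dot u u / s ^+ 2) = 1.
Proof. by move/inball_range/gammaR_sqr; rewrite enorm_sqr. Qed.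

Lemma one_sub_dot_self u : inball s u -> 1 - dot u u / s ^+ 2 = (gammaV s u ^+ 2)^-1.
Proof.
move=> u_in; apply: (@mulfI _ (gammaV s u ^+ 2)).
  by rewrite expf_neq0 // gt_eqF // gammaV_gt0.
by rewrite gammaV_sqr // mulfV // expf_neq0 // gt_eqF // gammaV_gt0.
Qed.

Lemma one_sub_dot_gt0 u v : inball s u -> dot v v <= s ^+ 2 -> 0 < 1 - dot u v / s ^+ 2.
Proof.
move=> /inballE u_in v_le; have := dot2_le u v.
rewrite subr_gt0 ltr_pdivrMr // mul1r; lra.
Qed.

(* [gdot u v] is the Minkowski product of the lifts (gammaV u, gammaV u * u / s)
   of [u] and [v] to the hyperboloid model. *)
Definition gdot u v := gammaV s u * gammaV s v * (1 - dot u v / s ^+ 2).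

Lemma gdot_self u : inball s u -> gdot u u = 1.
Proof. by move=> u_in; rewrite /gdot -expr2 gammaV_sqr. Qed.

Lemma gdot_gt0 u v : inball s u -> inball s v -> 0 < gdot u v.
Proof.
move=> u_in v_in; rewrite !mulr_gt0 ?gammaV_gt0 ?one_sub_dot_gt0 //.
by apply: ltW; apply/inballE.
Qed.

Lemma eadd_defect u v : inball s u -> 1 + dot u v / s ^+ 2 != 0 ->
  1 - dot (eadd s u v) (eadd s u v) / s ^+ 2
  = (1 - dot u u / s ^+ 2) * (1 - dot v v / s ^+ 2) / (1 + dot u v / s ^+ 2) ^+ 2.
Proof.
move=> u_in uv_neq0; have := one_sub_dot_self u_in; have := gammaV_gt0 u_in.
rewrite /eadd; set g := gammaV s u => g_gt0 g_inv.
have uu : dot u u = s ^+ 2 * (1 - (g ^+ 2)^-1) by rewrite -g_inv; field.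
have s2uv_neq0 : s ^+ 2 + dot u v != 0.
  have -> : s ^+ 2 + dot u v = s ^+ 2 * (1 + dot u v / s ^+ 2) by field.
  by rewrite mulf_neq0 // gt_eqF.
rewrite !(dotZl, dotZr, dotDl, dotDr) (dotC v u) uu.
by field; rewrite s2uv_neq0 s_neq0 !gt_eqF // addr_gt0.
Qed.

Lemma gyrodist_defect u v : inball s u -> inball s v ->
  1 - gyrodist s u v ^+ 2 / s ^+ 2 = (gdot u v ^+ 2)^-1.
Proof.
move=> u_in v_in; have Nu_in : inball s (- u) by rewrite /inball /enorm dotNl dotNr opprK.
have uv_gt0 : 0 < 1 - dot u v / s ^+ 2.
  by apply: one_sub_dot_gt0 => //; apply/ltW/inballE.
have s2uv_gt0 : 0 < s ^+ 2 - dot u v.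
  by move: uv_gt0; rewrite !subr_gt0 ltr_pdivrMr // mul1r.
rewrite /gyrodist enorm_sqr eadd_defect //; last by rewrite dotNl mulNr gt_eqF.
rewrite !dotNl dotNr opprK mulNr !one_sub_dot_self // /gdot.
by field; rewrite s_neq0 !gt_eqF ?gammaV_gt0.
Qed.

Lemma gyrodist_range u v : inball s u -> inball s v -> 0 <= gyrodist s u v < s.
Proof.
move=> u_in v_in; rewrite sqrtr_ge0 -gamma_defect_gt0 ?sqrtr_ge0 //.
by rewrite gyrodist_defect // invr_gt0 exprn_gt0 // gdot_gt0.
Qed.

Lemma gammaR_gyrodist u v : inball s u -> inball s v -> gammaR s (gyrodist s u v) = gdot u v.
Proof.
move=> u_in v_in; have d_range := gyrodist_range u_in v_in.
have := gammaR_sqr d_range; rewrite gyrodist_defect // => g_sqr.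
apply/eqP; rewrite -(eqrXn2 (isT : (0 < 2)%N)) ?ltW ?gammaR_gt0 ?gdot_gt0 //.
by apply/eqP; rewrite -[RHS]mul1r -g_sqr mulfVK // expf_neq0 // gt_eqF // gdot_gt0.
Qed.

Lemma gyrodist_eq_gdot O X r : inball s O -> inball s X -> 0 <= r < s ->
  gyrodist s O X = r <-> gdot O X = gammaR s r.
Proof.
move=> O_in X_in r_range; rewrite -gammaR_gyrodist //; split=> [-> //|].
exact: gammaR_inj (gyrodist_range O_in X_in) r_range.
Qed.

End Gamma.

Section CircleQuadratic.
Variables (R : realFieldType) (a b c m k : R).

Local Notation on_circle t := ((a + b * t) ^+ 2 = c ^+ 2 * (1 + 2 * m * t - k * t ^+ 2)).
Local Notation D := (b ^+ 2 + c ^+ 2 * k).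
Local Notation E := (a * b - c ^+ 2 * m).

Lemma on_circle_of_gamma l t :
  l ^+ 2 * (1 + 2 * m * t - k * t ^+ 2) = 1 -> l * (a + b * t) = c -> on_circle t.
Proof. by move=> l_sqr <-; rewrite exprMn mulrAC l_sqr mul1r. Qed.

Lemma on_circle_vieta t2 t3 : t2 != t3 -> on_circle t2 -> on_circle t3 ->
  D * (t2 + t3) = - 2 * E /\ D * (t2 * t3) = a ^+ 2 - c ^+ 2.
Proof.
move=> t23 on2 on3.
have sum : D * (t2 + t3) = - 2 * E.
  have /eqP : (t2 - t3) * (D * (t2 + t3) + 2 * E) = 0 by lra.
  by rewrite mulf_eq0 subr_eq0 (negbTE t23) /= => /eqP; lra.
by split=> //; have := congr1 (fun x => t2 * x) sum => /=; lra.
Qed.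

Lemma on_circle_reflect t : D != 0 -> on_circle t -> on_circle (- 2 * E / D - t).
Proof.
move=> D_neq0 on_t; set t' := _ - t.
have sum : D * (t' + t) + 2 * E = 0 by rewrite /t'; field.
have : (a + b * t') ^+ 2 - c ^+ 2 * (1 + 2 * m * t' - k * t' ^+ 2)
    = (a + b * t) ^+ 2 - c ^+ 2 * (1 + 2 * m * t - k * t ^+ 2)
      + (t' - t) * (D * (t' + t) + 2 * E) by ring.
by rewrite sum mulr0 addr0 on_t subrr => /eqP; rewrite subr_eq0 => /eqP.
Qed.

Lemma tangent_gamma l t : c != 0 -> on_circle t -> D * t = - E ->
  l * (a + b * t) = c -> l * (1 + m * t) = a / c.
Proof.
move=> c_neq0 on_t double l_lin.
have lin_neq0 : a + b * t != 0 by apply: contra_eq_neq l_lin => ->; rewrite mulr0 eq_sym.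
have power : c ^+ 2 * (1 + m * t) = a * (a + b * t).
  by have := congr1 (fun x => t * x) double => /=; lra.
have -> : l = c / (a + b * t) by rewrite -l_lin mulfK.
apply: (mulIf (mulf_neq0 c_neq0 lin_neq0)).
by transitivity (c ^+ 2 * (1 + m * t)); [field | rewrite power; field].
Qed.

Lemma gamma_sqr_sub1 l t : l ^+ 2 * (1 + 2 * m * t - k * t ^+ 2) = 1 ->
  (l * (1 + m * t)) ^+ 2 - 1 = l ^+ 2 * t ^+ 2 * (m ^+ 2 + k).
Proof. by move=> l_sqr; rewrite -[X in _ - X]l_sqr; ring. Qed.

Lemma secant_gamma_add1 l2 l3 t2 t3 : c != 0 -> t2 != t3 ->
  l2 ^+ 2 * (1 + 2 * m * t2 - k * t2 ^+ 2) = 1 -> l2 * (a + b * t2) = c ->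
  l3 ^+ 2 * (1 + 2 * m * t3 - k * t3 ^+ 2) = 1 -> l3 * (a + b * t3) = c ->
  D * (l2 * l3 * (1 + m * (t2 + t3) - k * (t2 * t3)) + 1) = 2 * c ^+ 2 * l2 * l3 * (m ^+ 2 + k).
Proof.
move=> c_neq0 t23 l2_sqr l2_lin l3_sqr l3_lin.
have [sum prod] := on_circle_vieta t23 (on_circle_of_gamma l2_sqr l2_lin)
  (on_circle_of_gamma l3_sqr l3_lin).
set F := a ^+ 2 * k + 2 * a * b * m - b ^+ 2.
have vieta_lin : D * ((a + b * t2) * (a + b * t3)) = c ^+ 2 * F.
  transitivity (D * a ^+ 2 + a * b * (D * (t2 + t3)) + b ^+ 2 * (D * (t2 * t3))).
    by ring.
  by rewrite sum prod /F; ring.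
have lin_prod : l2 * l3 * ((a + b * t2) * (a + b * t3)) = c ^+ 2.
  by rewrite expr2 -{1}l2_lin -l3_lin; ring.
have lF : l2 * l3 * F = D.
  apply: (mulfI (expf_neq0 2 c_neq0)).
  transitivity (l2 * l3 * (c ^+ 2 * F)); first by ring.
  rewrite -vieta_lin; transitivity (D * (l2 * l3 * ((a + b * t2) * (a + b * t3)))).
    by ring.
  by rewrite lin_prod mulrC.
have -> : D * (l2 * l3 * (1 + m * (t2 + t3) - k * (t2 * t3)) + 1)
    = l2 * l3 * (D + m * (D * (t2 + t3)) - k * (D * (t2 * t3)) + F) + (D - l2 * l3 * F) by ring.
by rewrite sum prod lF subrr addr0 /F; ring.
Qed.

Lemma secant_power_scalar (s l2 l3 t2 t3 x2 x3 : R) :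
  0 < c -> c <= a -> 0 < k -> t2 != t3 -> 0 < l2 -> 0 < l3 ->
  l2 ^+ 2 * (1 + 2 * m * t2 - k * t2 ^+ 2) = 1 -> l2 * (a + b * t2) = c ->
  l3 ^+ 2 * (1 + 2 * m * t3 - k * t3 ^+ 2) = 1 -> l3 * (a + b * t3) = c ->
  0 <= x2 -> x2 ^+ 2 = s ^+ 2 * ((l2 * (1 + m * t2)) ^+ 2 - 1) ->
  0 <= x3 -> x3 ^+ 2 = s ^+ 2 * ((l3 * (1 + m * t3)) ^+ 2 - 1) ->
  2 / (l2 * l3 * (1 + m * (t2 + t3) - k * (t2 * t3)) + 1) * x2 * x3
    = s ^+ 2 * (a ^+ 2 - c ^+ 2) / c ^+ 2.
Proof.
move=> c_gt0 c_le_a k_gt0 t23 l2_gt0 l3_gt0 l2_sqr l2_lin l3_sqr l3_lin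
  x2_ge0 x2_sqr x3_ge0 x3_sqr.
have mk_gt0 : 0 < m ^+ 2 + k by have := sqr_ge0 m; lra.
have D_gt0 : 0 < D by have := sqr_ge0 b; have := mulr_gt0 (exprn_gt0 2 c_gt0) k_gt0; lra.
have [_ prod] := on_circle_vieta t23 (on_circle_of_gamma l2_sqr l2_lin)
  (on_circle_of_gamma l3_sqr l3_lin).
have t23_ge0 : 0 <= t2 * t3 by rewrite -(pmulr_rge0 _ D_gt0) prod; nra.
have x23 : x2 * x3 = s ^+ 2 * (l2 * l3 * (t2 * t3) * (m ^+ 2 + k)).
  have rhs_ge0 : 0 <= s ^+ 2 * (l2 * l3 * (t2 * t3) * (m ^+ 2 + k)).
    by rewrite mulr_ge0 ?sqr_ge0 // mulr_ge0 ?(ltW mk_gt0) // mulr_ge0 // mulr_ge0 // ltW.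
  apply/eqP; rewrite -(eqrXn2 (isT : (0 < 2)%N) (mulr_ge0 x2_ge0 x3_ge0) rhs_ge0).
  by rewrite exprMn x2_sqr x3_sqr !gamma_sqr_sub1 //; apply/eqP; ring.
have key := secant_gamma_add1 (lt0r_neq0 c_gt0) t23 l2_sqr l2_lin l3_sqr l3_lin.
have -> : l2 * l3 * (1 + m * (t2 + t3) - k * (t2 * t3)) + 1
    = 2 * c ^+ 2 * l2 * l3 * (m ^+ 2 + k) / D by rewrite -key; field; rewrite gt_eqF.
rewrite -mulrA x23 -prod; field.
by rewrite !gt_eqF.
Qed.

End CircleQuadratic.

Section Line.
Variables (R : realType) (n : nat) (s : R).
Hypothesis s_gt0 : 0 < s.
Variables (P w : 'rV[R]_n).
Hypothesis P_in : inball s P.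
Implicit Types (O X Y : 'rV[R]_n) (t : R).

Definition line_m := - gammaV s P ^+ 2 * dot P w / s ^+ 2.
Definition line_k := gammaV s P ^+ 2 * dot w w / s ^+ 2.
Definition line_b O := - gammaV s O * gammaV s P * dot O w / s ^+ 2.

Let s_neq0 : s != 0. Proof. by rewrite gt_eqF. Qed.
Let gP_neq0 : gammaV s P != 0. Proof. by rewrite gt_eqF // gammaV_gt0. Qed.

Lemma line_defect X Y t t' : X = P + t *: w -> Y = P + t' *: w ->
  gammaV s P ^+ 2 * (1 - dot X Y / s ^+ 2) = 1 + line_m * (t + t') - line_k * (t * t').
Proof.
move=> -> ->; have := gammaV_sqr s_gt0 P_in.
rewrite !(dotDl, dotDr, dotZl, dotZr) (dotC w P) /line_m /line_k => gP_sqr.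
rewrite -[X in _ = X + _ - _]gP_sqr; ring.
Qed.

Lemma point_line_defect O X t : X = P + t *: w ->
  gammaV s O * gammaV s P * (1 - dot O X / s ^+ 2) = gdot s O P + line_b O * t.
Proof. by move=> ->; rewrite dotDr dotZr /gdot /line_b; ring. Qed.

Lemma gdot_line X Y t t' : X = P + t *: w -> Y = P + t' *: w ->
  gdot s X Y = gammaV s X / gammaV s P * (gammaV s Y / gammaV s P)
               * (1 + line_m * (t + t') - line_k * (t * t')).
Proof. by move=> hX hY; rewrite -(line_defect hX hY) /gdot; field; rewrite s_neq0 gP_neq0. Qed.

Lemma gdot_line_self X t : inball s X -> X = P + t *: w ->
  (gammaV s X / gammaV s P) ^+ 2 * (1 + 2 * line_m * t - line_k * t ^+ 2) = 1.
Proof. by move=> X_in hX; rewrite -[RHS](gdot_self s_gt0 X_in) (gdot_line hX hX); ring. Qed.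

Lemma gdot_line_base X t : X = P + t *: w ->
  gdot s X P = gammaV s X / gammaV s P * (1 + line_m * t).
Proof.
move=> hX; have hP : P = P + 0 *: w by rewrite scale0r addr0.
by rewrite (gdot_line hX hP) divff //; ring.
Qed.

Lemma gdot_point_line O X t : X = P + t *: w ->
  gdot s O X = gammaV s X / gammaV s P * (gdot s O P + line_b O * t).
Proof. by move=> hX; rewrite -(point_line_defect O hX) /gdot; field; rewrite s_neq0 gP_neq0. Qed.

Lemma line_k_gt0 : w != 0 -> 0 < line_k.
Proof.
by move=> w_neq0; rewrite /line_k divr_gt0 ?exprn_gt0 // mulr_gt0 ?dot_gt0 ?exprn_gt0 ?gammaV_gt0.
Qed.

End Line.

Section Circle.
Variables (R : realType) (n : nat) (s : R).
Hypothesis s_gt0 : 0 < s.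
Variables (P w O : 'rV[R]_n) (c : R).
Hypotheses (P_in : inball s P) (O_in : inball s O) (c_gt0 : 0 < c).
Implicit Types (A X : 'rV[R]_n) (t : R).

Local Notation a := (gdot s O P).
Local Notation b := (line_b s P w O).
Local Notation m := (line_m s P w).
Local Notation k := (line_k s P w).

Lemma on_circle_line X t : inball s X -> X = P + t *: w -> gdot s O X = c ->
  (a + b * t) ^+ 2 = c ^+ 2 * (1 + 2 * m * t - k * t ^+ 2).
Proof.
move=> X_in hX X_on; apply: (on_circle_of_gamma (gdot_line_self s_gt0 P_in X_in hX)).
by rewrite -(gdot_point_line s_gt0 P_in O hX).
Qed.

(* The equation forces 0 <= 1 + 2 m t - k t^2, i.e. X in the closed ball, where
   a + b t is positive; hence the inequality is strict and X lies in the open ball. *)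
Lemma line_on_circle t : (a + b * t) ^+ 2 = c ^+ 2 * (1 + 2 * m * t - k * t ^+ 2) ->
  inball s (P + t *: w) /\ gdot s O (P + t *: w) = c.
Proof.
set X := P + t *: w => on_t.
have defect : gammaV s P ^+ 2 * (1 - dot X X / s ^+ 2) = 1 + 2 * m * t - k * t ^+ 2.
  by rewrite (line_defect s_gt0 P_in (erefl X) (erefl X)); ring.
have c2_gt0 : 0 < c ^+ 2 := exprn_gt0 2 c_gt0.
have gP2_gt0 : 0 < gammaV s P ^+ 2 by rewrite exprn_gt0 // gammaV_gt0.
have XX_le : dot X X <= s ^+ 2.
  have : 0 <= 1 + 2 * m * t - k * t ^+ 2 by rewrite -(pmulr_rge0 _ c2_gt0) -on_t sqr_ge0.
  by rewrite -defect pmulr_rge0 // subr_ge0 ler_pdivrMr ?mul1r ?exprn_gt0.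
have lin_gt0 : 0 < a + b * t.
  rewrite -(point_line_defect s O (erefl X)).
  by rewrite !mulr_gt0 ?gammaV_gt0 // one_sub_dot_gt0.
have X_in : inball s X.
  have : 0 < 1 + 2 * m * t - k * t ^+ 2.
    by rewrite -(pmulr_rgt0 _ c2_gt0) -on_t exprn_gt0.
  by rewrite -defect pmulr_rgt0 // subr_gt0 ltr_pdivrMr ?mul1r ?exprn_gt0 // => /(inballE s_gt0).
split=> //; apply/eqP.
rewrite -(eqrXn2 (isT : (0 < 2)%N) (ltW (gdot_gt0 s_gt0 O_in X_in)) (ltW c_gt0)).
rewrite (gdot_point_line s_gt0 P_in O (erefl X)) exprMn on_t mulrCA.
by rewrite (gdot_line_self s_gt0 P_in X_in (erefl X)) mulr1.
Qed.

Lemma tangent_double_root A t1 :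
  w != 0 -> A = P + t1 *: w -> inball s A -> gdot s O A = c ->
  (forall t, inball s (P + t *: w) -> gdot s O (P + t *: w) = c -> P + t *: w = A) ->
  (b ^+ 2 + c ^+ 2 * k) * t1 = - (a * b - c ^+ 2 * m).
Proof.
move=> w_neq0 hA A_in A_on tangent.
have D_gt0 : 0 < b ^+ 2 + c ^+ 2 * k.
  have := mulr_gt0 (exprn_gt0 2 c_gt0) (line_k_gt0 s_gt0 P_in w_neq0).
  by have := sqr_ge0 b; lra.
(* The second root of the quadratic is also a point of the gyrocircle on the line. *)
set t' := - 2 * (a * b - c ^+ 2 * m) / (b ^+ 2 + c ^+ 2 * k) - t1.
have [X'_in X'_on] :=
  line_on_circle (on_circle_reflect (lt0r_neq0 D_gt0) (on_circle_line A_in hA A_on)).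
have := tangent _ X'_in X'_on; rewrite hA => /addrI/eqP.
rewrite -subr_eq0 -scalerBl scaler_eq0 (negbTE w_neq0) orbF subr_eq0 => /eqP t'_eq.
have : (b ^+ 2 + c ^+ 2 * k) * (t' + t1) = - 2 * (a * b - c ^+ 2 * m).
  by rewrite /t'; field; rewrite gt_eqF.
by rewrite /t' t'_eq; lra.
Qed.

Lemma tangent_power A t1 :
  w != 0 -> A = P + t1 *: w -> inball s A -> gdot s O A = c ->
  (forall t, inball s (P + t *: w) -> gdot s O (P + t *: w) = c -> P + t *: w = A) ->
  (gammaR s (gyrodist s A P) * gyrodist s A P) ^+ 2 = s ^+ 2 * (a ^+ 2 - c ^+ 2) / c ^+ 2.
Proof.
move=> w_neq0 hA A_in A_on tangent.
have double := tangent_double_root w_neq0 hA A_in A_on tangent.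
have gamma_AP : gammaR s (gyrodist s A P) = a / c.
  rewrite gammaR_gyrodist // (gdot_line_base s_gt0 P_in hA).
  apply: (tangent_gamma (lt0r_neq0 c_gt0) (on_circle_line A_in hA A_on) double).
  by rewrite -(gdot_point_line s_gt0 P_in O hA).
by rewrite gammaR_mul_sqr ?gyrodist_range // gamma_AP; field; rewrite gt_eqF.
Qed.

Lemma secant_power A2 A3 t2 t3 : c <= a ->
  A2 = P + t2 *: w -> A3 = P + t3 *: w -> A2 != A3 -> inball s A2 -> inball s A3 ->
  gdot s O A2 = c -> gdot s O A3 = c ->
  2 / (gammaR s (gyrodist s A2 A3) + 1) * (gammaR s (gyrodist s A2 P) * gyrodist s A2 P)
    * (gammaR s (gyrodist s A3 P) * gyrodist s A3 P) = s ^+ 2 * (a ^+ 2 - c ^+ 2) / c ^+ 2.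
Proof.
move=> c_le_a h2 h3 A23 A2_in A3_in A2_on A3_on.
have w_neq0 : w != 0 by apply: contraNneq A23 => w0; rewrite h2 h3 w0 !scaler0.
have t23 : t2 != t3 by apply: contraNneq A23 => t23; rewrite h2 h3 t23.
have ratio_gt0 X : inball s X -> 0 < gammaV s X / gammaV s P.
  by move=> X_in; rewrite divr_gt0 ?gammaV_gt0.
have gd_ge0 X : inball s X -> 0 <= gammaR s (gyrodist s X P) * gyrodist s X P.
  move=> X_in; have /andP[d_ge0 d_lt] := gyrodist_range s_gt0 X_in P_in.
  by rewrite mulr_ge0 // ltW // gammaR_gt0 ?d_ge0.
have gd_sqr X t : inball s X -> X = P + t *: w ->
    (gammaR s (gyrodist s X P) * gyrodist s X P) ^+ 2
    = s ^+ 2 * ((gammaV s X / gammaV s P * (1 + m * t)) ^+ 2 - 1).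
  move=> X_in hX; rewrite gammaR_mul_sqr ?gyrodist_range //.
  by rewrite gammaR_gyrodist // (gdot_line_base s_gt0 P_in hX).
rewrite gammaR_gyrodist // (gdot_line s_gt0 P_in h2 h3).
apply: (secant_power_scalar (b := b) c_gt0 c_le_a (line_k_gt0 s_gt0 P_in w_neq0) t23
  (ratio_gt0 _ A2_in) (ratio_gt0 _ A3_in) (gdot_line_self s_gt0 P_in A2_in h2) _
  (gdot_line_self s_gt0 P_in A3_in h3) _ (gd_ge0 _ A2_in) (gd_sqr _ _ A2_in h2)
  (gd_ge0 _ A3_in) (gd_sqr _ _ A3_in h3)).
- by rewrite -(gdot_point_line s_gt0 P_in O h2).
- by rewrite -(gdot_point_line s_gt0 P_in O h3).
Qed.

End Circle.

Lemma line_reparam (R : ringType) (V : lmodType R) (Q P w : V) (t0 t : R) :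
  P = Q + t0 *: w -> Q + t *: w = P + (t - t0) *: w.
Proof. by move=> ->; rewrite -addrA -scalerDl [t0 + _]addrC subrK. Qed.

Theorem mainTheorem4 (R : realType) (n : nat) (s : R)
  (B1 B2 B3 O : 'rV[R]_n) (r : R)
  (A1 A2 A3 T1 T2 P : 'rV[R]_n) :
  (2 <= n)%N -> 0 < s ->
  gyroplane_data s B1 B2 B3 -> gyroplane s B1 B2 B3 O -> 0 < r ->
  gyrocircle s B1 B2 B3 O r A1 -> gyrocircle s B1 B2 B3 O r A2 ->
  gyrocircle s B1 B2 B3 O r A3 ->
  A1 != A2 -> A1 != A3 -> A2 != A3 ->
  inball s T1 -> inball s T2 -> T1 != T2 ->
  (forall X, gyroline s T1 T2 X -> gyroplane s B1 B2 B3 X) ->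
  (forall X, gyroline s T1 T2 X /\ gyrocircle s B1 B2 B3 O r X <-> X = A1) ->
  gyroline s A2 A3 P -> gyroline s T1 T2 P ->
  ~ gyrocircle s B1 B2 B3 O r P ->
  let d1 := gyrodist s A1 P in
  let d2 := gyrodist s A2 P in
  let d3 := gyrodist s A3 P in
  let d23 := gyrodist s A2 A3 in
  gammaR s d1 ^+ 2 * d1 ^+ 2
    = 2 / (gammaR s d23 + 1) * (gammaR s d2 * d2) * (gammaR s d3 * d3).
Proof.
move=> _ s_gt0 _ [O_in _] _ [[A1_in _] dA1] [[A2_in _] dA2] [[A3_in _] dA3] _ _ A23
  _ _ T12 T_plane T_tangent [P_in [t0 P_sec]] [_ [tP P_tan]] _ d1 d2 d3 d23.
have r_range : 0 <= r < s by rewrite -dA1 gyrodist_range.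
have on_circle X : inball s X -> gyrodist s O X = r -> gdot s O X = gammaR s r.
  by move=> X_in /(gyrodist_eq_gdot s_gt0 O_in X_in r_range).
have c_gt0 := gammaR_gt0 s_gt0 r_range.
have T12_neq0 : T2 - T1 != 0 by rewrite subr_eq0 eq_sym.
have [[_ [tA A1_T]] _] := (T_tangent A1).2 erefl.
have tangent t : inball s (P + t *: (T2 - T1)) ->
    gdot s O (P + t *: (T2 - T1)) = gammaR s r -> P + t *: (T2 - T1) = A1.
  move=> X_in X_on; have X_T : gyroline s T1 T2 (P + t *: (T2 - T1)).
    by split=> //; exists (t + tP); rewrite (line_reparam _ P_tan) addrK.
  by apply/T_tangent; do 2!split=> //; [exact: T_plane | apply/gyrodist_eq_gdot].
have A1_P : A1 = P + (tA - tP) *: (T2 - T1) by rewrite A1_T; exact: line_reparam.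
have power := tangent_power s_gt0 P_in O_in c_gt0 T12_neq0 A1_P A1_in
  (on_circle _ A1_in dA1) tangent.
have c_le_a : gammaR s r <= gdot s O P.
  have := sqr_ge0 (gammaR s d1 * d1); rewrite power pmulr_lge0 ?invr_gt0 ?exprn_gt0 //.
  by rewrite pmulr_rge0 ?exprn_gt0 // subr_ge0 ler_pXn2r // nnegrE ltW // gdot_gt0.
have A2_P : A2 = P + (0 - t0) *: (A3 - A2) by rewrite -(line_reparam _ P_sec) scale0r addr0.
have A3_P : A3 = P + (1 - t0) *: (A3 - A2) by rewrite -(line_reparam _ P_sec) scale1r addrC subrK.
by rewrite -exprMn power -(secant_power s_gt0 P_in c_gt0 c_le_a A2_P A3_P A23 A2_in A3_in
  (on_circle _ A2_in dA2) (on_circle _ A3_in dA3)).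
Qed.
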